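(* Consider the Black-Scholes model and the Bermudan moving average option described in the context, with continuation value functions $\mathcal{C}_n$, $n\in\{M,\dots,N\}$. Then for every $n\in\{M,\dots,N\}$, every positive real number $\kappa$ and every admissible value $\mathbf{b}$ of $\mathbf{B}_n$ (a vector of positive reals of the appropriate dimension), \[ \mathcal{C}_n(\mathbf{b})=\kappa\,\mathcal{C}_n\!\left(\tfrac{1}{\kappa}\mathbf{b}\right), \] i.e. the continuation value is positively homogeneous of degree one.
   Context: Under a risk-neutral probability the underlying follows the Black-Scholes dynamics $dS_t/S_t=r\,dt+\sigma\,dB_t$ with constants $r$, $\sigma>0$, $S_0>0$, and $(B_t)$ a Brownian motion; hence conditionally on $S_{t_n}$, $S_{t_{n+1}}=S_{t_n}\exp\big((r-\sigma^2/2)\Delta t+\sigma\sqrt{\Delta t}\,G\big)$ with $G\sim\mathcal N(0,1)$ independent of the past. Fix a maturity $T>0$, integers $2\le M\le N$, $\Delta t=T/N$, $t_n=n\Delta t$. For $0\le n_1\le n_2\le N$ let $A_{n_1}^{n_2}=\frac{1}{n_2-n_1+1}\sum_{j=n_1}^{n_2}S_{t_j}$ (so $A_n^n=S_{t_n}$). For $n\in\{M,\dots,N\}$ let $J_n=\{n-M+1,\dots,\min\{n-1,N-M+1\}\}\cup\{n\}$ and define the vector of partial averages $\mathbf{A}_n=(A_j^n)_{j\in J_n}$ (in increasing order of $j$) and $\mathbf{B}_n=(A_j^n)_{j\in J_n,\ j\ge n-M+2}$, i.e. $\mathbf{A}_n$ with its first component $A_{n-M+1}^n$ removed. The components of $\mathbf{A}_{n+1}$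 are $A_{n+1}^{n+1}=S_{t_{n+1}}$ and $A_j^{n+1}=\frac{(n-j+1)A_j^n+S_{t_{n+1}}}{n-j+2}$, and these are functions of $\mathbf{B}_n$ and $S_{t_{n+1}}$. The payoff at $t_n$ is $\Psi_n(\mathbf{A}_n)=\max(0,A_n^n-A_{n-M+1}^n)$, and the option may be exercised at any $t_n$, $n=M,\dots,N$. The continuation values are defined by backward recursion: $\mathcal{C}_N\equiv 0$, $\mathcal{V}_n(\mathbf{A}_n)=\max(\Psi_n(\mathbf{A}_n),\mathcal{C}_n(\mathbf{B}_n))$, and for $n=N-1,\dots,M$, $\mathcal{C}_n(\mathbf{B}_n)=\mathbb{E}\big[e^{-r\Delta t}\mathcal{V}_{n+1}(\mathbf{A}_{n+1})\,\big|\,\mathbf{B}_n\big]$, viewed as a function of the value of $\mathbf{B}_n$. *)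

From HB Require Import structures.
From mathcomp Require Import all_boot all_order all_algebra.
From mathcomp Require Import all_classical all_reals all_analysis.
Set Implicit Arguments. Unset Strict Implicit. Unset Printing Implicit Defensive.
Import Order.TTheory GRing.Theory Num.Theory Num.Def.
Local Open Scope ring_scope.

(* Parameters: R real type, window M, number of dates N, rate r,
   volatility sigma, maturity T.  A vector indexed by a finite increasing
   list of time indices J is represented by a [seq R] aligned with J. *)
Section BMA.
Variables (R : realType) (M N : nat) (r sigma T : R).

Definition dt : R := T / N%:R.

(* J_n = {n-M+1, ..., min(n-1, N-M+1)} U {n}, in increasing order *)
Definition Jidx (n : nat) : seq nat :=
  rcons (iota (n.+1 - M) (minn n.-1 (N - M).+1 - (n.+1 - M)).+1) n.

Definition JBidx (n : nat) : seq nat := behead (Jidx n).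

Definition Acomp (n : nat) (a : seq R) (j : nat) : R := nth 0 a (index j (Jidx n)).

Definition Bcomp (n : nat) (b : seq R) (j : nat) : R := nth 0 b (index j (JBidx n)).

(* A_{n+1} as a function of B_n = b and S_{t_{n+1}} = s:
   A_{n+1}^{n+1} = s and A_j^{n+1} = ((n-j+1) A_j^n + s) / (n-j+2). *)
Definition nextA (n : nat) (b : seq R) (s : R) : seq R :=
  [seq (if j == n.+1 then s
        else (((n - j).+1)%:R * Bcomp n b j + s) / ((n - j).+2)%:R)
  | j <- Jidx n.+1].

Definition payoff (n : nat) (a : seq R) : R :=
  maxr 0 (Acomp n a n - Acomp n a (n.+1 - M)).

(* S_{t_{n+1}} given S_{t_n} = A_n^n (a component of B_n) and G = x *)
Definition nextS (n : nat) (b : seq R) (x : R) : R :=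
  Bcomp n b n * expR ((r - sigma ^+ 2 / 2) * dt + sigma * Num.sqrt dt * x).

(* cont k = C_{N-k}, by backward recursion; values are nonnegative,
   expectations are taken in the extended reals against N(0,1). *)
Fixpoint cont (k : nat) : seq R -> \bar R :=
  match k with
  | 0 => fun _ => 0%E
  | k'.+1 => fun b =>
      let n := (N - k'.+1)%N in
      (\int[normal_prob 0 1]_x
         ((expR (- r * dt))%:E *
          maxe (payoff n.+1 (nextA n b (nextS n b x)))%:E
               (cont k' (behead (nextA n b (nextS n b x))))))%E
  end.

Definition Cont (n : nat) : seq R -> \bar R := cont (N - n).

End BMA.

From HB Require Import structures.
From mathcomp Require Import all_boot all_order all_algebra.
From mathcomp Require Import all_classical all_reals all_analysis.
Import Order.TTheory GRing.Theory Num.Theory Num.Def.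
Local Open Scope ring_scope.

(* Every ingredient of the backward recursion is positively homogeneous of
   degree one in the state: the next price S_{t_{n+1}} and the updated partial
   averages scale with B_n, and so does the payoff
   max(0, A_n^n - A_{n-M+1}^n).  Maxima, discounting and integration against
   the Gaussian law commute with multiplication by kappa > 0, so homogeneity
   passes from C_{n+1} to C_n, by induction down from C_N = 0. *)

(* The continuation values are not known to be measurable, so
   [ge0_integralZl_EFin] does not apply; instead the scaling is carried
   through the supremum over simple functions that defines the integral. *)
Section ge0_integralZl_nonmeasurable.
Local Open Scope ereal_scope.
Context d (T : measurableType d) (R : realType).
Variable mu : {measure set T -> \bar R}.

Lemma ge0_integralZl_le (c : R) (g : T -> \bar R) : (0 < c)%R ->
  (forall x, 0 <= g x) -> c%:E * \int[mu]_x g x <= \int[mu]_x (c%:E * g x).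
Proof.
move=> c_gt0 g0; have c_ge0 := ltW c_gt0.
rewrite !ge0_integralTE// => [|x]; last by rewrite mule_ge0// lee_fin.
rewrite -ereal_sup_pZl//; apply: ge_ereal_sup => _ [_ [h hg <-] <-].
rewrite -sintegralrM; apply: ereal_sup_ubound; exists (scale_nnsfun h c_ge0) => //= x.
by rewrite EFinM lee_pmul2l.
Qed.

Lemma ge0_integralZl_gt0 (c : R) (g : T -> \bar R) : (0 < c)%R ->
  (forall x, 0 <= g x) -> \int[mu]_x (c%:E * g x) = c%:E * \int[mu]_x g x.
Proof.
move=> c_gt0 g0; apply/eqP; rewrite eq_le ge0_integralZl_le// andbT.
have cg0 x : 0 <= c%:E * g x by rewrite mule_ge0// lee_fin ltW.
rewrite -lee_pdivrMl//.
have ci_gt0 : (0 < c^-1)%R by rewrite invr_gt0.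
apply: le_trans (ge0_integralZl_le _ _ ci_gt0 cg0) _.
by under eq_integral do rewrite muleA -EFinM mulVf ?gt_eqF// mul1e.
Qed.
End ge0_integralZl_nonmeasurable.

Lemma nth_map_dflt (T1 T2 : Type) (x0 : T1) (y0 : T2) (f : T1 -> T2) s i :
  f x0 = y0 -> nth y0 (map f s) i = f (nth x0 s i).
Proof.
move=> fx0; have [lt_i_s|le_s_i] := ltnP i (size s); first exact: nth_map.
by rewrite !nth_default ?size_map.
Qed.

Section positive_homogeneity.
Variables (R : realType) (M N : nat) (r sigma T : R).
Implicit Types (c : R) (b : seq R).

Lemma BcompZ c n b j : Bcomp M N n (map ( *%R c) b) j = c * Bcomp M N n b j.
Proof. exact/nth_map_dflt/mulr0. Qed.

Lemma AcompZ c n a j : Acomp M N n (map ( *%R c) a) j = c * Acomp M N n a j.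
Proof. exact/nth_map_dflt/mulr0. Qed.

Lemma nextSZ c n b x :
  nextS M N r sigma T n (map ( *%R c) b) x = c * nextS M N r sigma T n b x.
Proof. by rewrite /nextS BcompZ mulrA. Qed.

Lemma nextAZ c n b s :
  nextA M N n (map ( *%R c) b) (c * s) = map ( *%R c) (nextA M N n b s).
Proof.
rewrite /nextA -map_comp; apply: eq_map => j /=.
by case: ifP => // _; rewrite BcompZ mulrCA -mulrDr mulrA.
Qed.

Lemma payoff_ge0 n (a : seq R) : 0 <= payoff M N n a.
Proof. by rewrite /payoff le_max lexx. Qed.

Lemma payoffZ c n a : 0 <= c -> payoff M N n (map ( *%R c) a) = c * payoff M N n a.
Proof. by move=> c_ge0; rewrite /payoff !AcompZ -mulrBr maxr_pMr// mulr0. Qed.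

Lemma contZ k c b : 0 < c ->
  cont M N r sigma T k (map ( *%R c) b) = (c%:E * cont M N r sigma T k b)%E.
Proof.
elim: k c b => [|k IHk] c b c_gt0; cbn [cont]; first by rewrite mule0.
rewrite -ge0_integralZl_gt0// => [|x]; last first.
  by rewrite mule_ge0 ?lee_fin ?expR_ge0// le_max lee_fin payoff_ge0.
apply: eq_integral => x _.
rewrite nextSZ nextAZ behead_map payoffZ ?ltW// IHk// EFinM.
by rewrite -maxe_pMr ?lee_fin ?ltW// muleCA.
Qed.

End positive_homogeneity.

Theorem proposition1 (R : realType) (M N : nat) (r sigma T : R) :
  (2 <= M)%N -> (M <= N)%N -> 0 < sigma -> 0 < T ->
  forall n : nat, (M <= n <= N)%N ->
  forall kappa : R, 0 < kappa ->
  forall b : seq R, size b = size (JBidx M N n) -> (forall x, x \in b -> 0 < x) ->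
  Cont M N r sigma T n b = ((kappa%:E) * Cont M N r sigma T n (map (fun x => (kappa^-1 * x)%R) b))%E.
Proof.
(* Homogeneity holds for every [b] and all parameters: no hypothesis is needed. *)
move=> _ _ _ _ n _ kappa kappa_gt0 b _ _.
by rewrite /Cont contZ ?invr_gt0// muleA -EFinM mulfV ?gt_eqF// mul1e.
Qed.
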